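(* Let $L=\mathbb{Z}\times\mathbb{Z}$ with the product $$(p,q)\cdot(p',q')=\Bigl(p+p',\ q+q'+\binom{p}{2}\binom{p'}{2}\Bigr).$$ Then $L$ is a commutative loop which is torsion-free nilpotent of class $4$, with $$D_2L=D_3L=D_4L=\{(0,q)\mid q\in\mathbb{Z}\},$$ while $\mathrm{LMlt}(L)$ is nilpotent of class $3$.
   Context: Here $\binom{p}{2}=p(p-1)/2$ for $p\in\mathbb{Z}$. A loop is a set with a product and two-sided identity in which all left multiplications $x\mapsto ax$ and right multiplications $x\mapsto xa$ are bijective. $\mathrm{LMlt}(L)$ is the group of permutations of $L$ generated by the left multiplications $L_a\colon x\mapsto ax$. The loop algebra $\mathbb{Q}L$ has basis $L$ with bilinearly extended product; $I$ is the kernel of the linear map $\mathbb{Q}L\to\mathbb{Q}$ sending each element of $L$ to $1$; $I^k$ is the ideal spanned by all products (any bracketing) of at least $k$ elements of $I$; $D_kL=\{g\in L\mid g-1\in I^k\}$. $L$ is torsion-free nilpotent of class $n$ if $D_{n+1}L$ is trivial and $D_nL$ is not. A group $G$ is nilpotent of class $c$ if $\gamma_{c+1}G=1\neq\gamma_cG$, where $\gamma_1G=G$, $\gamma_{k+1}G=[G,\gamma_kG]$. *)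

From mathcomp Require Import all_boot all_order all_algebra.
Set Implicit Arguments. Unset Strict Implicit. Unset Printing Implicit Defensive.
Import GRing.Theory Num.Theory.
Local Open Scope ring_scope.

Definition is_loop (T : Type) (mul : T -> T -> T) (e : T) : Prop :=
  [/\ (forall x, mul e x = x), (forall x, mul x e = x),
      (forall a, bijective (mul a)) & (forall a, bijective (fun x => mul x a))].

(* An element of QL is represented by a finite formal combination
   sum_i a_i g_i, given as a list of pairs (a_i, g_i); two representations
   denote the same element iff their coefficient functions agree. *)
Definition coef (T : eqType) (s : seq (rat * T)) (g : T) : rat :=
  \sum_(x <- s) (if x.2 == g then x.1 else 0).

Definition aug (T : Type) (s : seq (rat * T)) : rat := \sum_(x <- s) x.1.

Definition QLmul (T : Type) (mul : T -> T -> T) (s t : seq (rat * T)) :=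
  [seq (x.1 * y.1, mul x.2 y.2) | x <- s, y <- t].

(* IProd mul m u : u is a product (with some bracketing) of m elements of I *)
Inductive IProd (T : Type) (mul : T -> T -> T) : nat -> seq (rat * T) -> Prop :=
  | IProd_base s : aug s = 0 -> IProd mul 1 s
  | IProd_mul m n s t : IProd mul m s -> IProd mul n t ->
                        IProd mul (m + n) (QLmul mul s t).

(* c (a coefficient function) lies in I^k: the linear span of all products
   of at least k elements of I *)
Definition in_Ipow (T : eqType) (mul : T -> T -> T) (k : nat) (c : T -> rat) : Prop :=
  exists r : seq (rat * seq (rat * T)),
    (forall u, u \in r -> exists2 m, (k <= m)%N & IProd mul m u.2) /\
    (forall g, c g = \sum_(u <- r) u.1 * coef u.2 g).

(* D_k L = { g | g - 1 \in I^k } *)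
Definition Dsub (T : eqType) (mul : T -> T -> T) (e : T) (k : nat) (g : T) : Prop :=
  in_Ipow mul k (coef [:: (1, g); (-1, e)]).

Definition tf_nilpotent_class (T : eqType) (mul : T -> T -> T) (e : T) (n : nat) : Prop :=
  (forall g, Dsub mul e n.+1 g -> g = e) /\ (exists g, Dsub mul e n g /\ g <> e).

Inductive gen_group (T : Type) (S : (T -> T) -> Prop) : (T -> T) -> Prop :=
  | gg_id : gen_group S id
  | gg_gen f : S f -> gen_group S f
  | gg_comp f g : gen_group S f -> gen_group S g -> gen_group S (f \o g)
  | gg_inv f g : gen_group S f -> cancel f g -> cancel g f -> gen_group S g
  | gg_ext f g : gen_group S f -> f =1 g -> gen_group S g.

Definition LMlt (T : Type) (mul : T -> T -> T) : (T -> T) -> Prop :=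
  gen_group (fun f => exists a, f = mul a).

(* commutators [g,h] = g^-1 h^-1 g h with g in G, h in H *)
Definition comm_set (T : Type) (G H : (T -> T) -> Prop) : (T -> T) -> Prop :=
  fun c => exists g h g' h', [/\ G g, H h, cancel g g' /\ cancel g' g,
                                 cancel h h' /\ cancel h' h &
                                 c = g' \o h' \o g \o h].

(* lower central series: lcs G 1 = G, lcs G (k+1) = [G, lcs G k] *)
Fixpoint lcs (T : Type) (G : (T -> T) -> Prop) (k : nat) : (T -> T) -> Prop :=
  match k with
  | 0 => G
  | 1 => G
  | k'.+1 => gen_group (comm_set G (lcs G k'))
  end.

Definition group_nilpotent_class (T : Type) (G : (T -> T) -> Prop) (c : nat) : Prop :=
  (forall f, lcs G c.+1 f -> f =1 id) /\ (exists f, lcs G c f /\ ~ (f =1 id)).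

Definition binom2 (p : int) : int := divz (p * (p - 1)) 2.

Definition Lmul (x y : int * int) : int * int :=
  (x.1 + y.1, x.2 + y.2 + binom2 x.1 * binom2 y.1).

Definition Le : int * int := (0, 0).

(* The augmentation, the first coordinate p, the polynomial binom2 p and the
   second coordinate q extend to linear functionals on QL vanishing on I, I^2,
   I^3 and I^5 respectively; by induction on products this follows from
   p(xy) = p(x) + p(y), binom2 (p + p') = binom2 p + binom2 p' + p p' and
   q(xy) = q(x) + q(y) + binom2(p) binom2(p').  Hence D_2 L lies in
   {(0,q) | q in Z} and D_5 L = 1.  Conversely (0,1) - 1 is an explicit
   combination of products of four elements of I, and left multiplication by
   the central elements (0,i) preserves such products, so every (0,q) lies in
   D_4 L.
   Every element of LMlt(L) has the form
   (x1, x2) |-> (x1 + s, x2 + a binom2 x1 + b x1 + c).  Commutators with such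
   maps have s = a = 0, commutators with those also have b = 0 and are
   translations of x2, which commute with everything; and
   [L_(1,0), [L_(1,0), L_(2,0)]] is a nontrivial translation. *)

From mathcomp Require Import all_boot all_order all_algebra zify ring.
Set Implicit Arguments. Unset Strict Implicit. Unset Printing Implicit Defensive.
Import GRing.Theory.
Local Open Scope ring_scope.

(** * The loop algebra of a magma *)

Section LoopAlgebra.

Variables (T : eqType) (mul : T -> T -> T).

Definition lin_ext (f : T -> rat) (s : seq (rat * T)) : rat :=
  \sum_(x <- s) x.1 * f x.2.

Definition QLdiff (x y : T) : seq (rat * T) := [:: (1, x); (-1, y)].

Lemma aug_lin_ext s : aug s = lin_ext (fun=> 1) s.
Proof. by apply: eq_bigr => x _; rewrite mulr1. Qed.

Lemma lin_ext_QLmul (f : T -> rat) (r : seq ((T -> rat) * (T -> rat))) s t :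
    (forall x y, f (mul x y) = \sum_(gh <- r) gh.1 x * gh.2 y) ->
  lin_ext f (QLmul mul s t) = \sum_(gh <- r) lin_ext gh.1 s * lin_ext gh.2 t.
Proof.
move=> fM; rewrite /lin_ext /QLmul big_allpairs_dep /=.
transitivity (\sum_(gh <- r) \sum_(x <- s) \sum_(y <- t)
                (x.1 * gh.1 x.2) * (y.1 * gh.2 y.2)); last first.
  apply: eq_bigr => gh _; rewrite big_distrl; apply: eq_bigr => x _ /=.
  by rewrite big_distrr.
rewrite [RHS]exchange_big; apply: eq_bigr => x _.
rewrite [RHS]exchange_big; apply: eq_bigr => y _.
by rewrite fM big_distrr; apply: eq_bigr => gh _ /=; ring.
Qed.

Lemma IProd_aug m s : IProd mul m s -> aug s = 0.
Proof.
elim=> // {}m n {}s t _ augs _ augt.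
rewrite aug_lin_ext (@lin_ext_QLmul _ [:: (fun=> 1, fun=> 1)]) => [|x y].
  by rewrite big_seq1 -!aug_lin_ext augs mul0r.
by rewrite big_seq1 mulr1.
Qed.

Lemma IProd_QLdiff x y : IProd mul 1 (QLdiff x y).
Proof. by apply: IProd_base; rewrite /aug !big_cons big_nil /= addr0 subrr. Qed.

Definition vanishes_on_Ipow (k : nat) (f : T -> rat) : Prop :=
  forall m s, IProd mul m s -> (k <= m)%N -> lin_ext f s = 0.

Lemma vanishes_on_Ipow_mul k a b (f g h : T -> rat) :
    (1 < k)%N -> (a + b <= k.+1)%N ->
    vanishes_on_Ipow a g -> vanishes_on_Ipow b h ->
    (forall x y, f (mul x y) = f x + f y + g x * h y) ->
  vanishes_on_Ipow k f.
Proof.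
move=> k_gt1 abk g0 h0 fM m _ [s _ | m1 m2 s t Ps Pt] k_m; first by lia.
rewrite (@lin_ext_QLmul _ [:: (f, fun=> 1); (fun=> 1, f); (g, h)]); last first.
  by move=> x y; rewrite !big_cons big_nil fM /=; ring.
rewrite !big_cons big_nil -!aug_lin_ext (IProd_aug Ps) (IProd_aug Pt).
have [a_m1 | m1_a] := leqP a m1; first by rewrite (g0 _ _ Ps a_m1); ring.
by rewrite (h0 _ _ Pt); [ring | lia].
Qed.

Lemma lin_ext_coef (f : T -> rat) s (X : seq T) :
  uniq X -> {subset map snd s <= X} -> lin_ext f s = \sum_(h <- X) coef s h * f h.
Proof.
move=> uX; elim: s => [|[a x] s IHs] sX.
  by rewrite /lin_ext big_nil big1 // => h _; rewrite /coef big_nil mul0r.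
rewrite /lin_ext big_cons -/(lin_ext f s) IHs => [|y ys]; last first.
  by apply: sX; rewrite inE ys orbT.
rewrite /coef; under [RHS]eq_bigr => h _ do rewrite big_cons mulrDl.
rewrite big_split /=; congr (_ + _).
rewrite (bigD1_seq x) ?sX ?mem_head //= eqxx big1 ?addr0 // => h /negPf xh.
by rewrite eq_sym xh mul0r.
Qed.

Lemma Dsub_vanishes e k g f :
  Dsub mul e k g -> vanishes_on_Ipow k f -> f g = f e.
Proof.
move=> [r [r_Ipow coefE]] f_vanish.
pose X := undup (g :: e :: flatten [seq map snd u.2 | u <- r]).
have uX : uniq X := undup_uniq _.
have sub_u u : u \in r -> {subset map snd u.2 <= X}.
  move=> ur y yu; rewrite mem_undup !inE; apply/orP; right; apply/orP; right.
  by apply/flattenP; exists (map snd u.2) => //; apply: map_f.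
have : lin_ext f (QLdiff g e) = \sum_(u <- r) u.1 * lin_ext f u.2.
  rewrite (lin_ext_coef _ uX) => [|y]; last first.
    by rewrite !inE => /orP[]/eqP->; rewrite mem_undup !inE eqxx ?orbT.
  under eq_bigr => h _ do rewrite coefE big_distrl /=.
  rewrite exchange_big /=; apply: eq_big_seq => u ur.
  rewrite (lin_ext_coef _ uX (sub_u u ur)) big_distrr /=.
  by apply: eq_bigr => h _; rewrite mulrA.
rewrite big1_seq => [|u /andP[_ ur]]; last first.
  by have [m km Pu] := r_Ipow u ur; rewrite (f_vanish _ _ Pu km) mulr0.
rewrite /lin_ext !big_cons big_nil /= => /eqP.
by rewrite mul1r mulN1r addr0 subr_eq0 => /eqP.
Qed.

Lemma coef_QLdiff x y g : coef (QLdiff x y) g = (x == g)%:R - (y == g)%:R.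
Proof. by rewrite /coef !big_cons big_nil /=; do 2!case: eqP; rewrite ?subrr ?addr0. Qed.

Lemma coef_eq_on_support (s t : seq (rat * T)) :
  all (fun h => coef s h == coef t h) (map snd s ++ map snd t) -> coef s =1 coef t.
Proof.
move=> /allP st g; have [/st/eqP // | ] := boolP (g \in map snd s ++ map snd t).
rewrite mem_cat negb_or => /andP[gs gt].
suff coef_out u : g \notin map snd u -> coef u g = 0 by rewrite !coef_out.
elim: u => [|[a x] u IHu]; first by rewrite /coef big_nil.
rewrite inE negb_or => /andP[xg gu].
by rewrite /coef big_cons -/(coef u g) IHu //= eq_sym (negPf xg) addr0.
Qed.

Definition QLcomb (r : seq (rat * seq (rat * T))) : seq (rat * T) :=
  flatten [seq [seq (u.1 * x.1, x.2) | x <- u.2] | u <- r].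

Lemma coef_QLcomb r g : coef (QLcomb r) g = \sum_(u <- r) u.1 * coef u.2 g.
Proof.
rewrite /coef /QLcomb big_flatten /= big_map; apply: eq_bigr => u _.
rewrite big_map big_distrr /=; apply: eq_bigr => x _.
by case: eqP; rewrite ?mulr0.
Qed.

Lemma in_Ipow_le k k' c : (k <= k')%N -> in_Ipow mul k' c -> in_Ipow mul k c.
Proof.
move=> kk' [r [r_Ipow cE]]; exists r; split=> // u ur.
by have [m k'm Pu] := r_Ipow u ur; exists m => //; apply: leq_trans k'm.
Qed.

Lemma in_Ipow_QLdiff_refl k x : in_Ipow mul k (coef (QLdiff x x)).
Proof. by exists [::]; split=> // g; rewrite coef_QLdiff subrr big_nil. Qed.

Lemma in_Ipow_QLdiff_sym k x y :
  in_Ipow mul k (coef (QLdiff x y)) -> in_Ipow mul k (coef (QLdiff y x)).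
Proof.
move=> [r [r_Ipow cE]]; exists [seq (- u.1, u.2) | u <- r]; split.
  by move=> _ /mapP[u ur ->]; exact: r_Ipow u ur.
move=> g; rewrite coef_QLdiff -opprB -coef_QLdiff cE -sumrN big_map.
by apply: eq_bigr => u _; rewrite mulNr.
Qed.

Lemma in_Ipow_QLdiff_trans k x y z :
    in_Ipow mul k (coef (QLdiff x y)) -> in_Ipow mul k (coef (QLdiff y z)) ->
  in_Ipow mul k (coef (QLdiff x z)).
Proof.
move=> [r1 [r1_Ipow c1E]] [r2 [r2_Ipow c2E]]; exists (r1 ++ r2); split.
  by move=> u; rewrite mem_cat => /orP[/r1_Ipow | /r2_Ipow].
by move=> g; rewrite big_cat /= -c1E -c2E !coef_QLdiff addrA subrK.
Qed.

Section LeftNucleus.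

Variable z : T.
Hypothesis z_lnucl : forall x y, mul z (mul x y) = mul (mul z x) y.
Hypothesis z_bij : bijective (mul z).

Definition lmulQL (s : seq (rat * T)) : seq (rat * T) := [seq (x.1, mul z x.2) | x <- s].

Lemma IProd_lmulQL m s : IProd mul m s -> IProd mul m (lmulQL s).
Proof.
elim=> [{}s augs | {}m n {}s t _ IHs Pt _]; first by apply: IProd_base; rewrite /aug big_map.
suff -> : lmulQL (QLmul mul s t) = QLmul mul (lmulQL s) t by exact: IProd_mul IHs Pt.
rewrite /lmulQL /QLmul; elim: s {IHs} => //= x s IHs.
by rewrite map_cat IHs -map_comp; congr (_ ++ _); apply: eq_map => y /=; rewrite z_lnucl.
Qed.

Lemma in_Ipow_lmulQL k s : in_Ipow mul k (coef s) -> in_Ipow mul k (coef (lmulQL s)).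
Proof.
have [zinv zK zinvK] := z_bij.
have coef_lmulQL u g : coef (lmulQL u) g = coef u (zinv g).
  by rewrite /coef big_map; apply: eq_bigr => x _ /=; rewrite (can2_eq zK zinvK).
move=> [r [r_Ipow cE]]; exists [seq (u.1, lmulQL u.2) | u <- r]; split.
  move=> _ /mapP[u ur ->]; have [m km Pu] := r_Ipow u ur.
  by exists m => //; exact: IProd_lmulQL.
by move=> g; rewrite coef_lmulQL cE big_map; apply: eq_bigr => u _; rewrite coef_lmulQL.
Qed.

End LeftNucleus.

End LoopAlgebra.

(** * The loop L *)

Lemma binom2_mul2 p : binom2 p * 2 = p * (p - 1).
Proof.
rewrite /binom2; have pE := divz_eq p 2; set k := (p %/ 2)%Z in pE; set r := (p %% 2)%Z in pE.
have r_ge0 : 0 <= r by apply: modz_ge0.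
have r_lt2 : r < 2 by apply: ltz_pmod.
have r01 : r * (r - 1) = 0 by nia.
have -> : p * (p - 1) = k * (k * 2 + r * 2 - 1) * 2 by rewrite pE; nia.
by rewrite mulzK.
Qed.

Lemma binom2D p p' : binom2 (p + p') = binom2 p + binom2 p' + p * p'.
Proof. by have := binom2_mul2 p; have := binom2_mul2 p'; have := binom2_mul2 (p + p'); nia. Qed.

Lemma binom2_0 : binom2 0 = 0. Proof. by []. Qed.

Lemma binom2N p : binom2 (- p) = p * p - binom2 p.
Proof. by have := binom2D p (- p); rewrite subrr binom2_0 mulrN; lia. Qed.

Lemma LmulC x y : Lmul x y = Lmul y x.
Proof. by rewrite /Lmul; congr pair; ring. Qed.

Lemma Lmul_is_loop : is_loop Lmul Le.
Proof.
pose Linv (a y : int * int) := (y.1 - a.1, y.2 - a.2 - binom2 a.1 * binom2 (y.1 - a.1)).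
have LK a : cancel (Lmul a) (Linv a).
  by case: a => a1 a2 [x1 x2]; rewrite /Lmul /Linv /= [a1 + x1]addrC addrK; congr pair; ring.
have LinvK a : cancel (Linv a) (Lmul a).
  by case: a => a1 a2 [y1 y2]; rewrite /Lmul /Linv /=; congr pair; ring.
split.
- by case=> x1 x2; rewrite /Lmul /Le /= binom2_0 mul0r !add0r addr0.
- by case=> x1 x2; rewrite /Lmul /Le /= binom2_0 mulr0 !addr0.
- by move=> a; exists (Linv a).
- by move=> a; exists (Linv a) => x; rewrite LmulC ?LK ?LinvK.
Qed.

Lemma Lmul_central i x : Lmul (0, i) x = (x.1, x.2 + i).
Proof. by rewrite /Lmul /= binom2_0 mul0r add0r addr0 addrC. Qed.

(** * The dimension subloops of L *)

Definition coord1 (x : int * int) : rat := x.1%:~R.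
Definition binom2_coord1 (x : int * int) : rat := (binom2 x.1)%:~R.
Definition coord2 (x : int * int) : rat := x.2%:~R.

Lemma vanishes_coord1 : vanishes_on_Ipow Lmul 2 coord1.
Proof.
have zero0 : vanishes_on_Ipow Lmul 0 (fun=> 0).
  by move=> m s _ _; rewrite /lin_ext big1 // => x _; rewrite mulr0.
apply: (vanishes_on_Ipow_mul _ _ zero0 zero0) => // x y.
by rewrite /coord1 /= rmorphD mulr0 addr0.
Qed.

Lemma vanishes_binom2_coord1 : vanishes_on_Ipow Lmul 3 binom2_coord1.
Proof.
apply: (vanishes_on_Ipow_mul _ _ vanishes_coord1 vanishes_coord1) => // x y.
by rewrite /binom2_coord1 /coord1 /= binom2D !rmorphD rmorphM.
Qed.

Lemma vanishes_coord2 : vanishes_on_Ipow Lmul 5 coord2.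
Proof.
apply: (vanishes_on_Ipow_mul _ _ vanishes_binom2_coord1 vanishes_binom2_coord1) => // x y.
by rewrite /coord2 /binom2_coord1 /= !rmorphD rmorphM.
Qed.

Lemma Dsub_fst_eq0 k g : (2 <= k)%N -> Dsub Lmul Le k g -> g.1 = 0.
Proof.
move=> k_ge2 /(in_Ipow_le k_ge2) D2g.
by have := Dsub_vanishes D2g vanishes_coord1; rewrite /coord1 => /intr_inj.
Qed.

Lemma Dsub5_eq_Le g : Dsub Lmul Le 5 g -> g = Le.
Proof.
move=> D5g; have g1 : g.1 = 0 := @Dsub_fst_eq0 5 g isT D5g.
have := Dsub_vanishes D5g vanishes_coord2; rewrite /coord2 => /intr_inj.
by case: g g1 {D5g} => ? ? /= -> ->.
Qed.

Lemma in_Ipow4_QLdiff01 : in_Ipow Lmul 4 (coef (QLdiff (0, 1) Le)).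
Proof.
pose D : seq (rat * (int * int)) := QLdiff (1, 0) Le.
pose mu : seq (rat * (int * int)) := QLdiff (-1, 0) Le.
pose M := QLmul Lmul.
pose cube := M D (M D (M D mu)); pose sq := M (M D mu) (M D D).
(* Left multiplication by (1,0) is the shift p |-> p + 1, so D acts as a
   forward difference in p.  Both cube and sq are -D^4 applied to (-1,0),
   except that the product (-1,0)(2,0) occurring in sq is (1,1), not (1,0).
   Hence cube - sq = (1,1) - (1,0), which left multiplication by
   (-1,0) = 1 + mu sends to (0,1) - 1. *)
have P1 x y : IProd Lmul 1 (QLdiff x y) := IProd_QLdiff Lmul x y.
have Pcube : IProd Lmul 4 cube.
  exact: IProd_mul (P1 _ _) (IProd_mul (P1 _ _) (IProd_mul (P1 _ _) (P1 _ _))).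
have Psq : IProd Lmul 4 sq.
  exact: IProd_mul (IProd_mul (P1 _ _) (P1 _ _)) (IProd_mul (P1 _ _) (P1 _ _)).
exists [:: (1, cube); (-1, sq); (1, M mu cube); (-1, M mu sq)]; split.
  move=> u; rewrite !inE => /or4P[]/eqP-> /=.
  - by exists 4%N.
  - by exists 4%N.
  - by exists 5%N => //; exact: IProd_mul (P1 _ _) Pcube.
  - by exists 5%N => //; exact: IProd_mul (P1 _ _) Psq.
move=> g; rewrite -coef_QLcomb; apply: coef_eq_on_support.
by rewrite /coef unlock; vm_compute.
Qed.

Lemma in_Ipow4_shift i a b c d :
    in_Ipow Lmul 4 (coef (QLdiff (a, b) (c, d))) ->
  in_Ipow Lmul 4 (coef (QLdiff (a, b + i) (c, d + i))).
Proof.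
have lnucl x y : Lmul (0, i) (Lmul x y) = Lmul (Lmul (0, i) x) y.
  by rewrite !Lmul_central /Lmul /=; congr pair; ring.
have [_ _ Lbij _] := Lmul_is_loop.
by move/(in_Ipow_lmulQL lnucl (Lbij _)); rewrite /lmulQL /= !Lmul_central.
Qed.

Lemma Dsub4_central q : Dsub Lmul Le 4 (0, q).
Proof.
have Dnat n : Dsub Lmul Le 4 (0, n%:Z).
  elim: n => [|n IHn]; first exact: in_Ipow_QLdiff_refl.
  apply: in_Ipow_QLdiff_trans IHn.
  by have := in_Ipow4_shift n in_Ipow4_QLdiff01; rewrite add0r -intS.
case: q => n; first exact: Dnat.
have := in_Ipow_QLdiff_sym (in_Ipow4_shift (Negz n) (Dnat n.+1)).
by rewrite NegzE addrN add0r.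
Qed.

(** * The left multiplication group of L *)

Record bmap := BMap { bm_s : int; bm_a : int; bm_b : int; bm_c : int }.

Definition bmap_fun (P : bmap) (x : int * int) : int * int :=
  (x.1 + bm_s P, x.2 + bm_a P * binom2 x.1 + bm_b P * x.1 + bm_c P).

Definition bmap_id := BMap 0 0 0 0.

Definition bmap_mul (P Q : bmap) : bmap :=
  BMap (bm_s P + bm_s Q) (bm_a P + bm_a Q) (bm_b P + bm_b Q + bm_a P * bm_s Q)
       (bm_c P + bm_c Q + bm_a P * binom2 (bm_s Q) + bm_b P * bm_s Q).

Definition bmap_inv (P : bmap) : bmap :=
  BMap (- bm_s P) (- bm_a P) (bm_a P * bm_s P - bm_b P)
       (- bm_a P * binom2 (- bm_s P) + bm_b P * bm_s P - bm_c P).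

Definition bmap_comm (P Q : bmap) : bmap :=
  bmap_mul (bmap_inv P) (bmap_mul (bmap_inv Q) (bmap_mul P Q)).

Lemma bmap_idE x : bmap_fun bmap_id x = x.
Proof. by case: x => x1 x2; rewrite /bmap_fun /=; congr pair; ring. Qed.

Lemma bmap_mulE P Q x : bmap_fun P (bmap_fun Q x) = bmap_fun (bmap_mul P Q) x.
Proof.
case: x P Q => x1 x2 [s a b c] [s' a' b' c'].
by rewrite /bmap_fun /bmap_mul /= binom2D; congr pair; ring.
Qed.

Lemma bmap_invK P : cancel (bmap_fun P) (bmap_fun (bmap_inv P)).
Proof.
move=> x; rewrite bmap_mulE; case: x P => x1 x2 [s a b c].
by rewrite /bmap_fun /bmap_mul /bmap_inv /= binom2N; congr pair; ring.
Qed.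

Lemma bmap_invVK P : cancel (bmap_fun (bmap_inv P)) (bmap_fun P).
Proof.
move=> x; rewrite bmap_mulE; case: x P => x1 x2 [s a b c].
by rewrite /bmap_fun /bmap_mul /bmap_inv /= binom2N; congr pair; ring.
Qed.

Lemma Lmul_bmap a : Lmul a =1 bmap_fun (BMap a.1 (binom2 a.1) 0 a.2).
Proof. by case: a => a1 a2 [x1 x2]; rewrite /Lmul /bmap_fun /=; congr pair; ring. Qed.

Lemma bmap_fun_inv f g P : f =1 bmap_fun P -> cancel f g -> g =1 bmap_fun (bmap_inv P).
Proof. by move=> fP fK y; rewrite -[y in LHS](bmap_invVK P) -fP fK. Qed.

Definition bmap_level (k : nat) (P : bmap) : Prop :=
  match k with
  | 0 | 1 => True
  | 2 => bm_s P = 0 /\ bm_a P = 0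
  | 3 => [/\ bm_s P = 0, bm_a P = 0 & bm_b P = 0]
  | _ => [/\ bm_s P = 0, bm_a P = 0, bm_b P = 0 & bm_c P = 0]
  end.

Lemma bmap_level_id k : bmap_level k bmap_id.
Proof. by case: k => [|[|[|[|k]]]]. Qed.

Lemma bmap_level_mul k P Q :
  bmap_level k P -> bmap_level k Q -> bmap_level k (bmap_mul P Q).
Proof.
case: P Q => s a b c [s' a' b' c']; case: k => [|[|[|[|k]]]] //=.
- by move=> [-> ->] [-> ->]; split; ring.
- by move=> [-> -> ->] [-> -> ->]; split; ring.
- by move=> [-> -> -> ->] [-> -> -> ->]; rewrite binom2_0; split; ring.
Qed.

Lemma bmap_level_inv k P : bmap_level k P -> bmap_level k (bmap_inv P).
Proof.
case: P => s a b c; case: k => [|[|[|[|k]]]] //=.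
- by move=> [-> ->]; split; ring.
- by move=> [-> -> ->]; split; ring.
- by move=> [-> -> -> ->]; rewrite oppr0 binom2_0; split; ring.
Qed.

Lemma bmap_level_comm k P Q : bmap_level k Q -> bmap_level k.+1 (bmap_comm P Q).
Proof.
case: P Q => s a b c [s' a' b' c']; rewrite /bmap_comm /bmap_mul /bmap_inv /=.
case: k => [|[|[|[|k]]]] /=.
- by move=> _; split; ring.
- by move=> _; split; ring.
- by move=> [-> ->]; split; ring.
- by move=> [-> -> ->]; rewrite !oppr0 !add0r !addr0 binom2N binom2_0; split; ring.
- by move=> [-> -> -> ->]; rewrite !oppr0 !add0r !addr0 binom2N binom2_0; split; ring.
Qed.

Definition is_bmap (cond : bmap -> Prop) (f : int * int -> int * int) : Prop :=
  exists2 P, cond P & f =1 bmap_fun P.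

Lemma gen_group_bmap k S f :
  (forall g, S g -> is_bmap (bmap_level k) g) -> gen_group S f -> is_bmap (bmap_level k) f.
Proof.
move=> S_bmap; elim=> [| h /S_bmap // | h g _ [P kP hP] _ [Q kQ gQ]
                      | h g _ [P kP hP] hK _ | h g _ [P kP hP] hg].
- by exists bmap_id; [exact: bmap_level_id | move=> x; rewrite bmap_idE].
- by exists (bmap_mul P Q); [exact: bmap_level_mul | move=> x; rewrite /= hP gQ bmap_mulE].
- by exists (bmap_inv P); [exact: bmap_level_inv | exact: bmap_fun_inv hP hK].
- by exists P => // x; rewrite -hg.
Qed.

Lemma lcs_LMlt_bmap k f : lcs (LMlt Lmul) k.+1 f -> is_bmap (bmap_level k.+1) f.
Proof.
have LMlt_bmap g : LMlt Lmul g -> is_bmap (bmap_level 1) g.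
  apply: gen_group_bmap => _ [a ->].
  by exists (BMap a.1 (binom2 a.1) 0 a.2) => //; exact: Lmul_bmap.
elim: k f => [|k IHk] f; first exact: LMlt_bmap.
apply: gen_group_bmap => _ [g [h [g' [h' [Gg Hh [gK _] [hK _] ->]]]]].
have [P _ gP] := LMlt_bmap g Gg; have [Q kQ hQ] := IHk h Hh.
exists (bmap_comm P Q); first exact: bmap_level_comm.
move=> x; rewrite /= hQ gP (bmap_fun_inv gP gK) (bmap_fun_inv hQ hK).
by rewrite -!bmap_mulE.
Qed.

Lemma lcs4_LMlt_trivial f : lcs (LMlt Lmul) 4 f -> f =1 id.
Proof.
by move=> /(@lcs_LMlt_bmap 3) [[s a b c] /= [-> -> -> ->] fP] x; rewrite fP bmap_idE.
Qed.

Lemma comm_set_bmap G H P Q :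
    G (bmap_fun P) -> H (bmap_fun Q) ->
  gen_group (comm_set G H) (bmap_fun (bmap_comm P Q)).
Proof.
move=> GP HQ; apply: (@gg_ext _ _ (bmap_fun (bmap_inv P) \o bmap_fun (bmap_inv Q)
                                     \o bmap_fun P \o bmap_fun Q)).
  apply: gg_gen; exists (bmap_fun P), (bmap_fun Q), (bmap_fun (bmap_inv P)).
  by exists (bmap_fun (bmap_inv Q)); split=> //; split=> x; rewrite ?bmap_invK ?bmap_invVK.
by move=> x; rewrite /= -!bmap_mulE.
Qed.

Lemma lcs3_LMlt_nontrivial : exists f, lcs (LMlt Lmul) 3 f /\ ~ f =1 id.
Proof.
have LMlt_L a : LMlt Lmul (bmap_fun (BMap a.1 (binom2 a.1) 0 a.2)).
  by apply: gg_ext (Lmul_bmap a); apply: gg_gen; exists a.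
pose L1 := BMap 1 (binom2 1) 0 0; pose L2 := BMap 2 (binom2 2) 0 0.
exists (bmap_fun (bmap_comm L1 (bmap_comm L1 L2))); split.
  exact: comm_set_bmap (LMlt_L (1, 0)) (comm_set_bmap (LMlt_L (1, 0)) (LMlt_L (2, 0))).
by move/(_ (0, 0))/eqP; vm_compute.
Qed.

Lemma Dsub_Lmul_iff k g : (2 <= k <= 4)%N -> Dsub Lmul Le k g <-> g.1 = 0.
Proof.
move=> /andP[k_ge2 k_le4]; split; first exact: Dsub_fst_eq0.
by case: g => _ q /= ->; exact: in_Ipow_le k_le4 (Dsub4_central q).
Qed.

Theorem proposition3p3 :
  (is_loop Lmul Le /\ (forall x y, Lmul x y = Lmul y x)) /\
  tf_nilpotent_class Lmul Le 4 /\
  (forall g, Dsub Lmul Le 2 g <-> g.1 = 0) /\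
  (forall g, Dsub Lmul Le 3 g <-> g.1 = 0) /\
  (forall g, Dsub Lmul Le 4 g <-> g.1 = 0) /\
  group_nilpotent_class (LMlt Lmul) 3.
Proof.
split; first by split; [exact: Lmul_is_loop | exact: LmulC].
split; first by split; [exact: Dsub5_eq_Le | exists (0, 1); split; [exact: Dsub4_central|]].
do 3 (split; first by move=> g; apply: Dsub_Lmul_iff).
by split; [exact: lcs4_LMlt_trivial | exact: lcs3_LMlt_nontrivial].
Qed.
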